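(* Let $0<c_1\le 0.2$ and suppose $t\le c_1 n$. Then for all sufficiently large $n$ and all $k\ge 0$, with $L=\sum_{i=1}^x (a_i-t_i)\, d_i\, e^{d_i k/n}$, we have $\frac{L}{n-d_{\max}}\ge 1$.
   Context: Setting: $n$ vertices, a target set $B$ with $|B|=t$, each vertex $v$ has out-degree $d_v$ with $2\le d_{\min}\le d_v\le d_{\max}$ (constants). $d_1,\dots,d_x$ are the distinct out-degrees, $a_i$ is the number of vertices of out-degree $d_i$ (so $\sum_i a_i=n$), and $t_i$ the number of vertices of $B$ of out-degree $d_i$ (so $\sum_i t_i = t$). *)

From HB Require Import structures.
From mathcomp Require Import all_boot all_order all_algebra.
From mathcomp Require Import reals.
From mathcomp.analysis Require Import sequences exp.
Set Implicit Arguments. Unset Strict Implicit. Unset Printing Implicit Defensive.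
Import Order.TTheory GRing.Theory Num.Theory.
Local Open Scope ring_scope.

(* Vertices are 'I_n; deg v is the out-degree of v; B is the target set. *)

Definition distinct_degs (n : nat) (deg : 'I_n -> nat) : seq nat :=
  undup [seq deg v | v : 'I_n].

Definition deg_count (n : nat) (deg : 'I_n -> nat) (di : nat) : nat :=
  #|[set v : 'I_n | deg v == di]|.

Definition deg_count_in (n : nat) (deg : 'I_n -> nat) (B : {set 'I_n}) (di : nat) : nat :=
  #|[set v in B | deg v == di]|.

Definition Lsum (R : realType) (n : nat) (deg : 'I_n -> nat) (B : {set 'I_n}) (k : R) : R :=
  \sum_(di <- distinct_degs deg)
     ((deg_count deg di)%:R - (deg_count_in deg B di)%:R) * di%:R
       * expR (di%:R * k / n%:R).

(* Every vertex outside B has out-degree at least 2 and every exponential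
   factor is at least 1 (as k >= 0), so L >= 2 (n - t) >= 2 (1 - c1) n > n,
   while n - d_max <= n is positive once n > d_max. *)
From HB Require Import structures.
From mathcomp Require Import all_boot all_order all_algebra.
From mathcomp Require Import reals.
From mathcomp.analysis Require Import sequences exp.
From mathcomp Require Import lra.
Import Order.TTheory GRing.Theory Num.Theory.
Local Open Scope ring_scope.

Lemma sum_card_fiber_undup {T : finType} {S : eqType} (f : T -> S) (A : {set T}) :
  (\sum_(y <- undup [seq f x | x <- enum T]) #|[set x in A | f x == y]| = #|A|)%N.
Proof.
rewrite (eq_bigr (fun y => \sum_x ((x \in A) * (f x == y)))%N); last first.
  move=> y _; rewrite -sum1_card big_mkcond /=; apply: eq_bigr => x _.
  by rewrite inE; case: (x \in A); case: (f x == y).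
rewrite exchange_big /= -sum1_card [RHS]big_mkcond /=; apply: eq_bigr => x _.
rewrite -big_distrr /=; case: (x \in A); last by rewrite mul0n.
have count_fx : count_mem (f x) (undup [seq f x | x <- enum T]) = 1%N.
  by rewrite count_uniq_mem ?undup_uniq // mem_undup map_f ?mem_enum.
rewrite mul1n -count_fx -sum1_count [RHS]big_mkcond /=.
by apply: eq_bigr => y _; rewrite eq_sym; case: (y == f x).
Qed.

Lemma deg_count_split {n : nat} (deg : 'I_n -> nat) (B : {set 'I_n}) (di : nat) :
  deg_count deg di = (deg_count_in deg B di + #|[set v in ~: B | deg v == di]|)%N.
Proof.
rewrite /deg_count /deg_count_in -(cardsID B [set v | deg v == di]).
by congr (_ + _)%N; apply: eq_card => v; rewrite !inE andbC.
Qed.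

Lemma Lsum_ge_outside {R : realType} {n dmin : nat} (deg : 'I_n -> nat)
    (B : {set 'I_n}) (k : R) :
  (forall v, dmin <= deg v)%N -> 0 <= k ->
  dmin%:R * #|~: B|%:R <= Lsum deg B k.
Proof.
move=> deg_ge k_ge0.
rewrite -(sum_card_fiber_undup deg) natr_sum mulr_sumr /Lsum.
rewrite big_seq [X in _ <= X]big_seq; apply: ler_sum => di.
rewrite mem_undup => /mapP [v _ ->] {di}.
rewrite (deg_count_split deg B) natrD [_%:R + _]addrC addrK mulrC -mulrA ler_wpM2l //.
rewrite -[X in X <= _]mulr1 ler_pM ?ler_nat //.
apply: le_trans (expR_ge1Dx _); rewrite lerDl.
by rewrite divr_ge0 ?mulr_ge0.
Qed.

Theorem lemma7 (R : realType) (c1 : R) (dmin dmax : nat) :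
  0 < c1 -> c1 <= 2 / 10 ->
  (2 <= dmin)%N -> (dmin <= dmax)%N ->
  exists N : nat, forall n : nat, (N <= n)%N ->
    forall (deg : 'I_n -> nat) (B : {set 'I_n}),
      (forall v, (dmin <= deg v <= dmax)%N) ->
      (#|B|%:R <= c1 * n%:R) ->
      forall k : R, 0 <= k ->
        1 <= Lsum deg B k / (n%:R - dmax%:R).
Proof.
move=> _ c1_le two_le_dmin _; exists dmax.+1 => n dmax_lt_n deg B deg_bounds tB k k_ge0.
have deg_ge2 v : (2 <= deg v)%N.
  by case/andP: (deg_bounds v) => + _; apply: leq_trans two_le_dmin.
have L_ge := Lsum_ge_outside deg B k deg_ge2 k_ge0.
have card_outside : #|~: B|%:R = n%:R - #|B|%:R :> R.
  by rewrite cardsCs setCK card_ord natrB // -[n in (_ <= n)%N]card_ord max_card.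
have t_le : #|B|%:R <= 2 / 10 * n%:R :> R by rewrite (le_trans tB) ?ler_wpM2r.
have dmax_lt : dmax%:R < n%:R :> R by rewrite ltr_nat.
rewrite ler_pdivlMr ?subr_gt0 // mul1r.
rewrite card_outside in L_ge.
have dmax_ge0 := ler0n R dmax.
(* lra gets lost in the nonlinear hypothesis tB, so drop it first. *)
by clear -L_ge t_le dmax_lt dmax_ge0; lra.
Qed.
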